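(* Let $S\in\{0,1\}^{n\times n}$ be a symmetric binary matrix. Then the problem $$\min_{R\in\mathcal{R}^n} \; \sum_{i,j=1}^n |R_{ij}-S_{ij}|$$ admits an optimal solution $R\in\{0,1\}^{n\times n}$.
   Context: A real matrix $R\in\mathbb{R}^{n\times n}$ is a strong-R-matrix (strong Robinson matrix) if it is symmetric and satisfies $R_{ij}\le R_{kl}$ for all $(i,j,k,l)$ with $|i-j|\ge|k-l|$. $\mathcal{R}^n$ denotes the set of $n\times n$ strong-R-matrices. *)

From HB Require Import structures.
From mathcomp Require Import all_boot all_order all_algebra.
Set Implicit Arguments. Unset Strict Implicit. Unset Printing Implicit Defensive.
Import Order.TTheory GRing.Theory Num.Theory.
Local Open Scope ring_scope.

Definition idist (n : nat) (i j : 'I_n) : nat := (maxn i j - minn i j)%N.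

Definition strongR (R : realFieldType) (n : nat) (A : 'M[R]_n) : Prop :=
  A^T = A /\
  (forall i j k l : 'I_n, (idist k l <= idist i j)%N -> A i j <= A k l).

Definition binary_mx (R : realFieldType) (n : nat) (A : 'M[R]_n) : Prop :=
  forall i j, A i j = 0 \/ A i j = 1.

Definition l1cost (R : realFieldType) (n : nat) (A B : 'M[R]_n) : R :=
  \sum_(i < n) \sum_(j < n) `|A i j - B i j|.

From HB Require Import structures.
From mathcomp Require Import all_boot all_order all_algebra.
From mathcomp Require Import lra.
Set Implicit Arguments. Unset Strict Implicit. Unset Printing Implicit Defensive.
Import Order.TTheory GRing.Theory Num.Theory.
Local Open Scope ring_scope.

(* A strong-R-matrix A is constant on each pair of diagonals |i - j| = d, with
   a nonincreasing profile a_d.  Clipping A entrywise to [0,1] keeps it a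
   strong-R-matrix and brings every entry closer to the binary S.  A clipped
   profile 1 >= a_0 >= ... >= a_(n-1) >= 0 is the convex combination, with
   weights a_(t-1) - a_t (a_(-1) = 1, a_n = 0), of the binary band matrices
   B_t = [|i - j| < t], t = 0..n.  Against a binary S the cost |x - s| is
   affine in x in [0,1], so the cost of A is the same convex combination of
   the costs of the B_t, and the cheapest B_t is optimal. *)

Lemma idistC n (i j : 'I_n) : idist i j = idist j i.
Proof. by rewrite /idist maxnC minnC. Qed.

Lemma idist_ltn n (i j : 'I_n) : (idist i j < n)%N.
Proof. by rewrite /idist (leq_ltn_trans (leq_subr _ _)) // gtn_max !ltn_ord. Qed.

Lemma idist0n m d : (d < m.+1)%N -> idist (ord0 : 'I_m.+1) (inord d) = d.
Proof. by move=> hd; rewrite /idist inordK // max0n min0n subn0. Qed.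

Section StrongRobinson.
Variable R : realFieldType.

Lemma strongR_idist n (A : 'M[R]_n) (i j k l : 'I_n) :
  strongR A -> idist i j = idist k l -> A i j = A k l.
Proof. by move=> [_ hA] e; apply/eqP; rewrite eq_le !hA ?e. Qed.

Definition band_mx n (t : nat) : 'M[R]_n := \matrix_(i, j) (idist i j < t)%N%:R.

Lemma band_mx_strongR n t : strongR (band_mx n t).
Proof.
split=> [|i j k l hkl]; first by apply/matrixP => i j; rewrite !mxE idistC.
rewrite !mxE; case: (ltnP (idist i j) t) => [hij|_].
  by rewrite (leq_ltn_trans hkl hij).
by case: (_ < _)%N; rewrite ?ler01.
Qed.

Lemma band_mx_binary n t : binary_mx (band_mx n t).
Proof. by move=> i j; rewrite mxE; case: (_ < _)%N; [right|left]. Qed.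

Lemma binary_bounds n (A : 'M[R]_n) i j : binary_mx A -> 0 <= A i j <= 1.
Proof. by case/(_ i j) => ->; rewrite ?lexx ler01. Qed.

Definition clip01 (x : R) : R := if x < 0 then 0 else if 1 < x then 1 else x.

Lemma clip01_bounds x : 0 <= clip01 x <= 1.
Proof.
rewrite /clip01; case: ltP => ?; first by rewrite lexx ler01.
by case: ltP => ?; apply/andP; lra.
Qed.

Lemma clip01_homo : {homo clip01 : x y / x <= y}.
Proof.
move=> x y; rewrite /clip01 => hxy.
by case: (ltP x 0); case: (ltP y 0); case: (ltP 1 x); case: (ltP 1 y); lra.
Qed.

(* Clipping is the projection onto [0,1], hence nonexpansive towards its points. *)
Lemma clip01_dist s x : 0 <= s <= 1 -> `|clip01 x - s| <= `|x - s|.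
Proof.
move=> /andP[s0 s1]; rewrite /clip01; case: ltP => x0.
  by rewrite sub0r normrN ger0_norm // ler0_norm; lra.
by case: ltP => x1 //; rewrite !ger0_norm; lra.
Qed.

Lemma strongR_clip01 n (A : 'M[R]_n) : strongR A -> strongR (map_mx clip01 A).
Proof.
move=> [hsym hA]; split=> [|i j k l hkl].
  by rewrite map_trmx hsym.
by rewrite !mxE; apply/clip01_homo/hA.
Qed.

Lemma l1cost_clip01 n (A S : 'M[R]_n) :
  binary_mx S -> l1cost (map_mx clip01 A) S <= l1cost A S.
Proof.
move=> hS; apply: ler_sum => i _; apply: ler_sum => j _.
by rewrite mxE clip01_dist // binary_bounds.
Qed.

Lemma sumr_telescope_down (p : nat -> R) a b :
  (a <= b)%N -> \sum_(a <= k < b) (p k - p k.+1) = p a - p b.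
Proof.
move=> hab; rewrite (telescope_sumr_eq (fun k => - p k)) //; first by rewrite opprK addrC.
by move=> k _; rewrite opprK addrC.
Qed.

Lemma sumr_layers (p : nat -> R) N d : (d < N)%N ->
  \sum_(k < N) (p k - p k.+1) * (d < k)%N%:R = p d.+1 - p N.
Proof.
move=> hd; rewrite -(big_mkord xpredT (fun k => (p k - p k.+1) * (d < k)%N%:R)).
rewrite (big_cat_nat (leq0n d.+1) hd) /=.
rewrite big_nat big1 ?add0r => [|k /andP[_ hk]]; last by rewrite ltnNge -ltnS hk mulr0.
rewrite -sumr_telescope_down //; apply: eq_big_nat => k /andP[hk _].
by rewrite hk mulr1.
Qed.

(* [profile A k] is a_(k-1) in the notation above, including a_(-1) = 1 and
   a_n = 0. *)
Definition profile m (A : 'M[R]_m.+1) (k : nat) : R :=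
  if k is d.+1 then (if (d < m.+1)%N then A ord0 (inord d) else 0) else 1.

Lemma profile_idist m (A : 'M[R]_m.+1) i j :
  strongR A -> A i j = profile A (idist i j).+1.
Proof.
by move=> hA; rewrite /= idist_ltn; apply: strongR_idist; rewrite ?idist0n ?idist_ltn.
Qed.

Lemma profile_nonincr m (A : 'M[R]_m.+1) k :
  strongR A -> (forall i j, 0 <= A i j <= 1) -> profile A k.+1 <= profile A k.
Proof.
move=> [_ hA] h01; case: k => [|k] /=.
  by case/andP: (h01 ord0 (inord 0)).
case: (ltnP k.+1 m.+1) => hk; last by case: ifP => _ //; case/andP: (h01 ord0 (inord k)).
by rewrite (ltnW hk); apply: hA; rewrite !idist0n // ltnW.
Qed.

Lemma strongR_band_decomposition n (A : 'M[R]_n) :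
  strongR A -> (forall i j, 0 <= A i j <= 1) ->
  exists w : nat -> R, [/\ forall k, 0 <= w k, \sum_(k < n.+1) w k = 1 &
    A = \sum_(k < n.+1) w k *: band_mx n k].
Proof.
case: n A => [|m] A hA h01.
  exists (fun _ => 1); split=> //; first by rewrite big_ord1.
  by apply/matrixP => -[].
exists (fun k => profile A k - profile A k.+1); split.
- by move=> k; rewrite subr_ge0 profile_nonincr.
- rewrite -(big_mkord xpredT (fun k => profile A k - profile A k.+1)).
  by rewrite sumr_telescope_down //= ltnn subr0.
- apply/matrixP => i j; rewrite summxE.
  under eq_bigr do rewrite !mxE.
  rewrite sumr_layers; last exact: ltnW (idist_ltn i j).
  by rewrite [profile A m.+2]/= ltnn subr0 -profile_idist.
Qed.

(* Against a binary s, |x - s| is affine in x on [0,1]. *)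
Lemma l1cost_convex_binary n N (w : nat -> R) (B : nat -> 'M[R]_n) S :
  binary_mx S -> (forall k, 0 <= w k) -> \sum_(k < N) w k = 1 ->
  (forall k, binary_mx (B k)) ->
  l1cost (\sum_(k < N) w k *: B k) S = \sum_(k < N) w k * l1cost (B k) S.
Proof.
move=> hS w_ge0 w_sum hB; rewrite /l1cost.
under [in RHS]eq_bigr do rewrite mulr_sumr.
rewrite [RHS]exchange_big; apply: eq_bigr => i _.
under [in RHS]eq_bigr do rewrite mulr_sumr.
rewrite [RHS]exchange_big; apply: eq_bigr => j _.
rewrite summxE; under [in LHS]eq_bigr do rewrite mxE.
have [B_ge0 B_le1] : (forall k, 0 <= B k i j) /\ (forall k, B k i j <= 1).
  by split=> k; case/andP: (binary_bounds i j (hB k)).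
case: (hS i j) => ->.
  rewrite subr0 ger0_norm; last by apply: sumr_ge0 => k _; rewrite mulr_ge0.
  by apply: eq_bigr => k _; rewrite subr0 ger0_norm.
rewrite ler0_norm; last first.
  by rewrite subr_le0 -w_sum; apply: ler_sum => k _; rewrite ler_piMr.
rewrite opprB -{1}w_sum -sumrB; apply: eq_bigr => k _.
by rewrite ler0_norm ?subr_le0 // opprB mulrBr mulr1.
Qed.

End StrongRobinson.

Arguments clip01 {R}.

Theorem lemma1 (R : realFieldType) (n : nat) (S : 'M[R]_n)
  (hSsym : S^T = S) (hSbin : binary_mx S) :
  exists Ropt : 'M[R]_n,
    [/\ strongR Ropt, binary_mx Ropt &
        forall R' : 'M[R]_n, strongR R' -> l1cost Ropt S <= l1cost R' S].
Proof.
pose cost (t : 'I_n.+1) := l1cost (band_mx R n t) S.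
have [t _ t_min] := @arg_minP _ _ _ ord0 xpredT cost isT.
exists (band_mx R n t); split; [exact: band_mx_strongR | exact: band_mx_binary |].
move=> A hA; apply: le_trans (l1cost_clip01 A hSbin).
have clipA01 i j : 0 <= map_mx clip01 A i j <= 1 by rewrite mxE clip01_bounds.
have [w [w_ge0 w_sum ->]] := strongR_band_decomposition (strongR_clip01 hA) clipA01.
rewrite l1cost_convex_binary //; last exact: band_mx_binary.
rewrite -[X in X <= _]mul1r -w_sum mulr_suml; apply: ler_sum => k _.
by apply: ler_wpM2l; [exact: w_ge0 | exact: t_min].
Qed.
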